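(* Let $G$ be a Polish group. If $G$ is locally strongly bounded, then every coarsely bounded subset of $G$ is strongly bounded.
   Context: A topological group is Polish if it is separable and completely metrizable. A subset of a topological group $G$ is coarsely bounded if it has finite diameter in every continuous left-invariant metric on $G$. A subset of $G$ is strongly bounded if it has finite diameter in every left-invariant metric on $G$ (not necessarily continuous). $G$ is locally strongly bounded if some open neighborhood of the identity is strongly bounded. *)

From HB Require Import structures.
From mathcomp Require Import all_boot all_order all_algebra.
From mathcomp Require Import all_classical all_reals all_analysis.
From mathcomp Require Import Rstruct Rstruct_topology.
Set Implicit Arguments. Unset Strict Implicit. Unset Printing Implicit Defensive.
Import Order.TTheory GRing.Theory Num.Theory.
Local Open Scope classical_set_scope.
Local Open Scope ring_scope.

Notation Real := Rdefinitions.R.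

Section Defs.
Variable G : topologicalType.

Definition is_group (mul : G -> G -> G) (inv : G -> G) (e : G) : Prop :=
  [/\ forall x y z, mul x (mul y z) = mul (mul x y) z,
      forall x, mul e x = x /\ mul x e = x &
      forall x, mul (inv x) x = e /\ mul x (inv x) = e].

Definition is_topological_group (mul : G -> G -> G) (inv : G -> G) (e : G) : Prop :=
  [/\ is_group mul inv e,
      continuous (fun p : G * G => mul p.1 p.2) &
      continuous inv].

Definition is_metric (d : G -> G -> Real) : Prop :=
  [/\ forall x y, 0 <= d x y,
      forall x y, d x y = 0 <-> x = y,
      forall x y, d x y = d y x &
      forall x y z, d x z <= d x y + d y z].

Definition left_invariant (mul : G -> G -> G) (d : G -> G -> Real) : Prop :=
  forall g x y, d (mul g x) (mul g y) = d x y.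

Definition continuous_metric (d : G -> G -> Real) : Prop :=
  continuous (fun p : G * G => d p.1 p.2).

Definition finite_diameter (d : G -> G -> Real) (A : set G) : Prop :=
  exists M : Real, forall x y, A x -> A y -> d x y <= M.

Definition coarsely_bounded (mul : G -> G -> G) (A : set G) : Prop :=
  forall d, is_metric d -> left_invariant mul d -> continuous_metric d ->
    finite_diameter d A.

Definition strongly_bounded (mul : G -> G -> G) (A : set G) : Prop :=
  forall d, is_metric d -> left_invariant mul d -> finite_diameter d A.

Definition locally_strongly_bounded (mul : G -> G -> G) (e : G) : Prop :=
  exists U : set G, [/\ open U, U e & strongly_bounded mul U].

Definition metric_compatible (d : G -> G -> Real) : Prop :=
  forall U : set G, open U <->
    (forall x, U x -> exists eps : Real, 0 < eps /\ forall y, d x y < eps -> U y).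

Definition metric_complete (d : G -> G -> Real) : Prop :=
  forall u : nat -> G,
    (forall eps : Real, 0 < eps -> exists N, forall n m, (N <= n)%N -> (N <= m)%N ->
        d (u n) (u m) < eps) ->
    exists l : G, forall eps : Real, 0 < eps -> exists N, forall n, (N <= n)%N ->
        d (u n) l < eps.

Definition separable_space : Prop :=
  exists S : set G, countable S /\ closure S = setT.

Definition completely_metrizable : Prop :=
  exists d, [/\ is_metric d, metric_compatible d & metric_complete d].

Definition polish_space : Prop := separable_space /\ completely_metrizable.

End Defs.

(* Let d be a left-invariant metric and U an open identity neighbourhood of
   finite d-diameter M.  Following Birkhoff and Kakutani, choose identity
   neighbourhoods V_0 <= U with V_(m+1)^3 <= V_m, shrinking to the identity
   (this is all that is used of the Polish hypothesis: a compatible metric).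
   Weigh g by c(g) = inf ({2^-m | g in V_m} u {1 + d(1,g)}) and let l(g) be
   the infimum of the total weights of the words with product g.  Kakutani's
   halving argument shows that l(g) < 2^-m forces g in V_m, so
   rho(x,y) = l(x^-1 y) + l(y^-1 x) is a continuous left-invariant metric.
   Cutting a word into consecutive pieces of weight about 1/2, each of which
   lies in V_0 up to one letter, gives d(x,y) <= (4M + 1) rho(x,y) + M; hence
   a coarsely bounded set, which has finite rho-diameter, has finite
   d-diameter. *)

From mathcomp Require Import all_boot all_order all_algebra.
From mathcomp Require Import all_classical all_reals all_analysis.
From mathcomp Require Import Rstruct Rstruct_topology.
From mathcomp Require Import lra.
Set Implicit Arguments. Unset Strict Implicit. Unset Printing Implicit Defensive.
Import Order.TTheory GRing.Theory Num.Theory.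
Local Open Scope classical_set_scope.
Local Open Scope ring_scope.

Section DyadicScale.
Context {R : realType}.

Lemma expN2_gt0 (m : nat) : 0 < 2 ^- m :> R.
Proof. by rewrite invr_gt0 exprn_gt0. Qed.

Lemma expN2_le1 (m : nat) : 2 ^- m <= 1 :> R.
Proof. by rewrite invf_le1 ?exprn_gt0 // exprn_ege1 // ler1n. Qed.

Lemma expN2S (m : nat) : 2 ^- m.+1 = 2 ^- m / 2 :> R.
Proof. by rewrite exprS invfM mulrC. Qed.

Lemma ltr_expN2 (m j : nat) : (2 ^- j < 2 ^- m :> R) = (m < j)%N.
Proof. by rewrite ltf_pV2 ?posrE ?exprn_gt0 // ltr_eXn2l // ltr1n. Qed.

Lemma expN2_lt (eps : R) : 0 < eps -> exists m, 2 ^- m < eps.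
Proof.
move=> eps_gt0; have [N _ N_lt] := near_infty_natSinv_expn_lt (PosNum eps_gt0).
by exists N; rewrite -div1r; apply: (N_lt N) => /=.
Qed.

End DyadicScale.

Section Words.
Variables (G : Type) (mul : G -> G -> G) (e : G).
Hypotheses (mulA : forall x y z, mul x (mul y z) = mul (mul x y) z)
           (mul1g : forall x, mul e x = x) (mulg1 : forall x, mul x e = x).
Variables (R : realType) (c : G -> R).
Hypothesis c_ge0 : forall g, 0 <= c g.

Definition wprod (l : seq G) : G := foldr mul e l.

Definition wweight (l : seq G) : R := \sum_(s <- l) c s.

Lemma wprod_cat l1 l2 : wprod (l1 ++ l2) = mul (wprod l1) (wprod l2).
Proof. by elim: l1 => [|s l1 IH] /=; rewrite ?mul1g // IH mulA. Qed.

Lemma wweight_ge0 l : 0 <= wweight l.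
Proof. exact: sumr_ge0. Qed.

Lemma wweight_cons s l : wweight (s :: l) = c s + wweight l.
Proof. exact: big_cons. Qed.

Lemma wweight_cat l1 l2 : wweight (l1 ++ l2) = wweight l1 + wweight l2.
Proof. exact: big_cat. Qed.

Lemma wweight_split (l : seq G) (t : R) : l <> [::] -> 0 <= t <= wweight l ->
  exists l1 s l2, [/\ l = l1 ++ s :: l2, wweight l1 <= t & wweight l2 <= wweight l - t].
Proof.
elim: l t => [//|s l IH] t _ /andP[t_ge0 t_le].
rewrite wweight_cons in t_le *.
case: l IH t_le => [|s0 l] IH t_le.
  by exists [::], s, [::]; rewrite /wweight !big_nil in t_le *; split => //; lra.
have [t_lt | cs_le] := ltrP t (c s).
  by exists [::], s, (s0 :: l); rewrite /wweight big_nil; split => //; lra.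
have [//||l1 [s' [l2 [-> w1 w2]]]] := IH (t - c s).
  by rewrite subr_ge0 cs_le lerBlDl.
by exists (s :: l1), s', l2; split; rewrite ?wweight_cons //; lra.
Qed.

Lemma wprod_in_chain (V : nat -> set G) :
  (forall m, V m e) ->
  (forall m g, c g < 2 ^- m -> V m.+1 g) ->
  (forall m a b b', V m.+1 a -> V m.+1 b -> V m.+1 b' -> V m (mul a (mul b b'))) ->
  forall l m, wweight l < 2 ^- m -> V m (wprod l).
Proof.
move=> Ve cV V3 l; have [n] := ubnP (size l); elim: n l => // n IH.
case=> [|s0 l0] size_l m w_lt; first exact: Ve.
have w_ge0 := wweight_ge0 (s0 :: l0).
have [//||l1 [s [l2 [El w1 w2]]]] := @wweight_split (s0 :: l0) (wweight (s0 :: l0) / 2).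
  by apply/andP; split; lra.
move: size_l w_lt w1 w2; rewrite El wprod_cat /= size_cat /= addnS ltnS.
rewrite wweight_cat wweight_cons => size_l w_lt w1 w2.
have w1_ge0 := wweight_ge0 l1; have w2_ge0 := wweight_ge0 l2.
have cs_ge0 := c_ge0 s; have halve := expN2S (R := R) m.
apply: V3.
- by apply: IH; [exact: leq_ltn_trans (leq_addr _ _) size_l | lra].
- by apply: cV; lra.
- by apply: IH; [exact: leq_ltn_trans (leq_addl _ _) size_l | lra].
Qed.

Lemma wprod_norm_le (N : G -> R) (M : R) : 0 <= M ->
  (forall a b, N (mul a b) <= N a + N b) ->
  (forall l, wweight l < 1 -> N (wprod l) <= M) ->
  (forall g, N g <= c g + M) ->
  forall l, N (wprod l) <= (4 * M + 1) * wweight l + M.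
Proof.
move=> M_ge0 N_mul N_small N_le l; have [n] := ubnP (size l); elim: n l => // n IH l size_l.
have w_ge0 := wweight_ge0 l.
have [w_lt1 | w_ge1] := ltrP (wweight l) 1.
  by apply: le_trans (N_small _ w_lt1) _; rewrite lerDr mulr_ge0 //; lra.
have [||l1 [s [l2 [El w1 w2]]]] := @wweight_split l (1 / 2).
- by move=> l_nil; move: w_ge1; rewrite l_nil /wweight big_nil; lra.
- by apply/andP; split; lra.
move: size_l w_ge1 w2; rewrite El wprod_cat /= size_cat /= addnS ltnS.
rewrite wweight_cat wweight_cons => size_l w_ge1 w2.
have N1 : N (wprod l1) <= M by apply: N_small; lra.
have N2 := IH l2 (leq_ltn_trans (leq_addl _ _) size_l).
have N3 := le_trans (N_mul (wprod l1) _) (lerD (lexx _) (N_mul s (wprod l2))).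
have Ns := N_le s; have w1_ge0 := wweight_ge0 l1; have cs_ge0 := c_ge0 s.
(* [l1 ++ [:: s]] has weight at least 1/2, which pays for the [2 * M] spent on [l1] and [s]. *)
nra.
Qed.

Definition wlength (g : G) : R := inf [set wweight l | l in [set l | wprod l = g]].

Let wlengths_nonempty g : [set wweight l | l in [set l | wprod l = g]] !=set0.
Proof. by exists (wweight [:: g]), [:: g] => //=; rewrite mulg1. Qed.

Lemma le_wlength (f : G -> R) : (forall l, f (wprod l) <= wweight l) ->
  forall g, f g <= wlength g.
Proof. by move=> f_le g; apply: lb_le_inf (wlengths_nonempty g) _ => _ [l <- <-]. Qed.

Lemma wlength_ge0 g : 0 <= wlength g.
Proof. exact: (@le_wlength (fun=> 0)) wweight_ge0 g. Qed.

Lemma wlength_le l : wlength (wprod l) <= wweight l.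
Proof. by apply: ge_inf; [exists 0 => _ [l' _ <-]; apply: wweight_ge0 | exists l]. Qed.

Lemma wlength_ltP g (r : R) : wlength g < r -> exists2 l, wprod l = g & wweight l < r.
Proof. by move=> /(inf_lt (wlengths_nonempty g))[_ [l lg <-] lr]; exists l. Qed.

Lemma wlength_unit : wlength e = 0.
Proof.
apply/eqP; rewrite eq_le wlength_ge0 andbT.
by apply: le_trans (wlength_le [::]) _; rewrite /wweight big_nil.
Qed.

Lemma wlength_le_weight g : wlength g <= c g.
Proof. by have := wlength_le [:: g]; rewrite /= mulg1 wweight_cons /wweight big_nil addr0. Qed.

Lemma wlength_mul_le g h : wlength (mul g h) <= wlength g + wlength h.
Proof.
rewrite -lerBlDr; apply: (le_wlength (f := fun x => wlength (mul x h) - wlength h)).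
move=> l1 /=; rewrite lerBlDr addrC -lerBlDr.
apply: (le_wlength (f := fun y => wlength (mul (wprod l1) y) - wweight l1)) => l2 /=.
by rewrite lerBlDr addrC -wweight_cat -wprod_cat; apply: wlength_le.
Qed.

Lemma norm_le_wlength (N : G -> R) (M : R) : 0 <= M ->
  (forall a b, N (mul a b) <= N a + N b) ->
  (forall l, wweight l < 1 -> N (wprod l) <= M) ->
  (forall g, N g <= c g + M) ->
  forall g, N g <= (4 * M + 1) * wlength g + M.
Proof.
move=> M_ge0 N_mul N_small N_le g; have L_gt0 : 0 < 4 * M + 1 by lra.
rewrite -lerBlDr mulrC -ler_pdivrMr //.
apply: (le_wlength (f := fun g => (N g - M) / (4 * M + 1))) => l.
by rewrite ler_pdivrMr // lerBlDr mulrC; apply: wprod_norm_le.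
Qed.

End Words.

Section ChainWeight.
Variables (G : Type) (R : realType) (V : nat -> set G) (N : G -> R).
Hypotheses (V_succ : forall m g, V m.+1 g -> V m g) (N_ge0 : forall g, 0 <= N g).

Definition chain_weights (g : G) : set R :=
  [set 2 ^- j | j in [set j | V j g]] `|` [set 1 + N g].

Definition chain_weight (g : G) : R := inf (chain_weights g).

Lemma chain_le m j g : (m <= j)%N -> V j g -> V m g.
Proof.
move=> mj; suff : V j `<=` V m by apply.
apply: (homo_leq (f := V) (r := fun A B => B `<=` A)) mj => //.
- by move=> A; apply: subset_refl.
- by move=> B A C BA CB; apply: subset_trans CB BA.
Qed.

Let chain_weights_nonempty g : chain_weights g !=set0.
Proof. by exists (1 + N g); right. Qed.

Let chain_weights_lb0 g : lbound (chain_weights g) 0.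
Proof. by move=> _ [[j _ <-] | ->]; [exact/ltW/expN2_gt0 | have := N_ge0 g; lra]. Qed.

Lemma chain_weight_ge0 g : 0 <= chain_weight g.
Proof. exact: lb_le_inf. Qed.

Lemma chain_weight_le m g : V m g -> chain_weight g <= 2 ^- m.
Proof. by move=> Vmg; apply: ge_inf; [exists 0 | left; exists m]. Qed.

Lemma chain_weight_lt m g : chain_weight g < 2 ^- m -> V m.+1 g.
Proof.
case/(inf_lt (chain_weights_nonempty g)) => _ [[j Vjg <-] | ->] lt_m.
  by apply: chain_le Vjg; rewrite -(ltr_expN2 (R := R)).
by have := @expN2_le1 R m; have := N_ge0 g; lra.
Qed.

Lemma le_chain_weight (M : R) : 0 <= M -> (forall g, V 0 g -> N g <= M) ->
  forall g, N g <= chain_weight g + M.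
Proof.
move=> M_ge0 N_le g; rewrite -lerBlDr; apply: lb_le_inf => // _ [[j Vjg <-] | ->].
  by have := N_le g (chain_le (leq0n j) Vjg); have := @expN2_gt0 R j; lra.
lra.
Qed.

End ChainWeight.

Section TopologicalGroup.
Variables (G : topologicalType) (mul : G -> G -> G) (inv : G -> G) (e : G).
Hypothesis G_top : is_topological_group mul inv e.

Let mulA x y z : mul x (mul y z) = mul (mul x y) z.
Proof. by case: G_top => [[]]. Qed.
Let mul1g x : mul e x = x.
Proof. by case: G_top => [[_ /(_ x)[]]]. Qed.
Let mulg1 x : mul x e = x.
Proof. by case: G_top => [[_ /(_ x)[]]]. Qed.
Let mulVg x : mul (inv x) x = e.
Proof. by case: G_top => [[_ _ /(_ x)[]]]. Qed.
Let mulgV x : mul x (inv x) = e.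
Proof. by case: G_top => [[_ _ /(_ x)[]]]. Qed.
Let mul_cont : continuous (fun p : G * G => mul p.1 p.2).
Proof. by case: G_top. Qed.
Let inv_cont : continuous inv.
Proof. by case: G_top. Qed.

Lemma nbhs_mul_split a b W : nbhs (mul a b) W ->
  exists2 A, nbhs a A & exists2 B, nbhs b B & forall x y, A x -> B y -> W (mul x y).
Proof.
move=> /(@mul_cont (a, b))[[A B] /= [A_a B_b] AB_W].
by exists A => //; exists B => // x y Ax By; apply: (AB_W (x, y)).
Qed.

Lemma nbhs_mul_cube W : nbhs e W ->
  exists2 V, nbhs e V & forall a b b', V a -> V b -> V b' -> W (mul a (mul b b')).
Proof.
rewrite -{1}(mul1g e) => /nbhs_mul_split[A A_e [B B_e AB_W]].
move: B_e; rewrite -{1}(mul1g e) => /nbhs_mul_split[A' A'_e [B' B'_e AB'_B]].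
exists (A `&` (A' `&` B')); first by do 2?apply: filterI.
by move=> a b b' [Aa _] [_ [A'b _]] [_ [_ B'b']]; apply: AB_W (AB'_B _ _ A'b B'b').
Qed.

Lemma nbhs_chain (W : nat -> set G) : (forall m, nbhs e (W m)) ->
  exists V : nat -> set G, [/\ forall m, nbhs e (V m), forall m, V m `<=` W m &
    forall m a b b', V m.+1 a -> V m.+1 b -> V m.+1 b' -> V m (mul a (mul b b'))].
Proof.
move=> W_e.
(* [T A] is junk when [A] is not a neighbourhood of [e]. *)
have /choice[T T_cube] : forall A : set G, exists B : set G, nbhs e A ->
    nbhs e B /\ forall a b b', B a -> B b -> B b' -> A (mul a (mul b b')).
  move=> A; have [/nbhs_mul_cube[B B_e B_cube] | not_A_e] := pselect (nbhs e A).
    by exists B.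
  by exists A => /not_A_e.
pose V := fix V m := if m is m'.+1 then T (V m' `&` W m) else W 0.
have V_e m : nbhs e (V m).
  by elim: m => [|m IH] //=; apply: (T_cube _ (filterI IH (W_e _))).1.
have V_cube m a b b' :
    V m.+1 a -> V m.+1 b -> V m.+1 b' -> (V m `&` W m.+1) (mul a (mul b b')).
  exact: (T_cube _ (filterI (V_e m) (W_e _))).2.
have V1 m : V m e := nbhs_singleton (V_e m).
exists V; split => //.
- case=> [|m] g //= Vg.
  by have [] := V_cube m g e e Vg (V1 _) (V1 _); rewrite !mulg1.
- by move=> m a b b' Va Vb Vb'; have [] := V_cube m a b b' Va Vb Vb'.
Qed.

Lemma nbhs_inv_mul_pair a W : nbhs e W ->
  nbhs a [set x | W (mul (inv a) x) /\ W (mul (inv x) a)].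
Proof.
rewrite -(mulVg a) => /nbhs_mul_split[A A_inva [B B_a AB_W]].
apply: filterI.
  by apply: filterS B_a => x Bx; apply: AB_W (nbhs_singleton A_inva) Bx.
have : nbhs a (inv @^-1` A) by apply: inv_cont.
by apply: filterS => x Ax; apply: AB_W Ax (nbhs_singleton B_a).
Qed.

Lemma mul_inv_chain x y z : mul (mul (inv x) y) (mul (inv y) z) = mul (inv x) z.
Proof. by rewrite -mulA (mulA y) mulgV mul1g. Qed.

Lemma mul_inv_translate g x y : mul (inv (mul g x)) (mul g y) = mul (inv x) y.
Proof.
have -> : mul g y = mul (mul g x) (mul (inv x) y) by rewrite -mulA (mulA x) mulgV mul1g.
by rewrite mulA mulVg mul1g.
Qed.

Lemma left_invariant_distE d x y : left_invariant mul d -> d x y = d e (mul (inv x) y).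
Proof. by move=> d_inv; rewrite -(d_inv x e) mulg1 mulA mulgV mul1g. Qed.

Lemma left_invariant_dist_mul_le d a b : is_metric d -> left_invariant mul d ->
  d e (mul a b) <= d e a + d e b.
Proof. by move=> [_ _ _ d_tri] d_inv; rewrite -(d_inv a e b) mulg1 d_tri. Qed.

Section LengthDist.
Variable ell : G -> Real.
Hypotheses (ell_ge0 : forall g, 0 <= ell g) (ell_unit : ell e = 0)
  (ell_mul_le : forall g h, ell (mul g h) <= ell g + ell h).

Definition length_dist x y := ell (mul (inv x) y) + ell (mul (inv y) x).

Lemma length_dist_sym x y : length_dist x y = length_dist y x.
Proof. by rewrite /length_dist addrC. Qed.

Lemma length_dist_triangle x y z : length_dist x z <= length_dist x y + length_dist y z.
Proof.
rewrite /length_dist -(mul_inv_chain x y z) -(mul_inv_chain z y x).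
have := ell_mul_le (mul (inv x) y) (mul (inv y) z).
by have := ell_mul_le (mul (inv z) y) (mul (inv y) x); lra.
Qed.

Lemma length_dist_left_invariant : left_invariant mul length_dist.
Proof. by move=> g x y; rewrite /length_dist !mul_inv_translate. Qed.

Lemma length_dist_metric : (forall g, ell g = 0 -> g = e) -> is_metric length_dist.
Proof.
move=> ell_sep; split=> [x y | x y | x y | x y z].
- exact: addr_ge0.
- split=> [d0 | ->]; last by rewrite /length_dist mulVg ell_unit addr0.
  have /ell_sep xy_e : ell (mul (inv x) y) = 0.
    move: d0; rewrite /length_dist.
    by have := ell_ge0 (mul (inv y) x); have := ell_ge0 (mul (inv x) y); lra.
  by rewrite -[y]mul1g -(mulgV x) -mulA xy_e mulg1.
- exact: length_dist_sym.
- exact: length_dist_triangle.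
Qed.

Lemma length_dist_continuous : (forall eps, 0 < eps -> nbhs e [set g | ell g < eps]) ->
  continuous_metric length_dist.
Proof.
move=> ell_small [a b]; apply/(@cvgrPdist_lt _ Real^o) => eps eps_gt0.
have eps4 : 0 < eps / 4 :> Real by lra.
exists ([set x | ell (mul (inv a) x) < eps / 4 /\ ell (mul (inv x) a) < eps / 4],
        [set y | ell (mul (inv b) y) < eps / 4 /\ ell (mul (inv y) b) < eps / 4]).
  by split; apply: nbhs_inv_mul_pair (ell_small _ eps4).
move=> [x y] /= [[ax xa] [byy yb]].
have := length_dist_triangle a x b; have := length_dist_triangle x y b.
have := length_dist_triangle x a y; have := length_dist_triangle a b y.
rewrite (length_dist_sym b y) (length_dist_sym x a) /length_dist.
move=> t1 t2 t3 t4; rewrite ltr_norml; apply/andP; split; lra.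
Qed.

End LengthDist.

Lemma exists_continuous_metric_dominating (B : nat -> set G) (U : set G)
    (d : G -> G -> Real) (M : Real) :
  (forall m, nbhs e (B m)) -> (forall g, (forall m, B m g) -> g = e) ->
  nbhs e U -> is_metric d -> left_invariant mul d -> 0 <= M ->
  (forall g, U g -> d e g <= M) ->
  exists rho, [/\ is_metric rho, left_invariant mul rho, continuous_metric rho &
    forall x y, d x y <= (4 * M + 1) * rho x y + M].
Proof.
move=> B_e B_sep U_e d_metric d_inv M_ge0 U_le.
have [V [V_e V_sub V_cube]] := nbhs_chain (fun m => filterI U_e (B_e m)).
have V1 m : V m e := nbhs_singleton (V_e m).
have V_succ m g : V m.+1 g -> V m g.
  by move=> Vg; have := V_cube m g e e Vg (V1 _) (V1 _); rewrite !mulg1.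
have N_ge0 g : 0 <= d e g by case: d_metric.
pose c := chain_weight V (d e); pose ell := wlength mul e c.
have c_ge0 g : 0 <= c g := chain_weight_ge0 V N_ge0 g.
have wprod_V l m : wweight c l < 2 ^- m -> V m (wprod mul e l).
  by apply: (wprod_in_chain mulA mul1g c_ge0) => // k g; apply: (chain_weight_lt V_succ N_ge0).
have ell_lt m g : ell g < 2 ^- m -> V m g.
  by case/(wlength_ltP mulg1) => l <-; apply: wprod_V.
have ell_small eps : 0 < eps -> nbhs e [set g | ell g < eps].
  move=> eps_gt0; have [m m_lt] := expN2_lt eps_gt0.
  apply: filterS (V_e m) => g Vg /=; apply: (le_lt_trans _ m_lt).
  exact: le_trans (wlength_le_weight mulg1 c_ge0 g) (chain_weight_le N_ge0 Vg).
have ell_sep g : ell g = 0 -> g = e.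
  move=> ell0; apply: B_sep => m.
  have Vmg : V m g by apply: ell_lt; rewrite ell0 expN2_gt0.
  by case: (V_sub m g Vmg).
have V0_le g : V 0 g -> d e g <= M by move=> /(V_sub 0)[/U_le].
have ell_dom g : d e g <= (4 * M + 1) * ell g + M.
  apply: (norm_le_wlength mulA mul1g mulg1 c_ge0 M_ge0) => [a b | l l_lt1 | h].
  - exact: left_invariant_dist_mul_le.
  - by apply/V0_le/wprod_V; rewrite expr0 invr1.
  - exact: (le_chain_weight V_succ M_ge0 V0_le).
have ell_ge0 := wlength_ge0 mulg1 c_ge0.
have ell_mul_le := wlength_mul_le mulA mul1g mulg1 c_ge0.
exists (length_dist ell); split.
- exact: (length_dist_metric ell_ge0 (wlength_unit mulg1 c_ge0) ell_mul_le ell_sep).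
- exact: length_dist_left_invariant.
- exact: (length_dist_continuous ell_mul_le ell_small).
- move=> x y; rewrite (left_invariant_distE x y d_inv); apply: le_trans (ell_dom _) _.
  by rewrite lerD2r ler_wpM2l ?lerDl //; lra.
Qed.

End TopologicalGroup.

Lemma metric_ball_nbhs (G : topologicalType) (d : G -> G -> Real) x (r : Real) :
  is_metric d -> metric_compatible d -> 0 < r -> nbhs x [set y | d x y < r].
Proof.
move=> [_ d_eq0 _ d_tri] d_compat r_gt0; apply: open_nbhs_nbhs; split.
  apply/d_compat => y /= dxy; exists (r - d x y); split; first by rewrite subr_gt0.
  by move=> z; have := d_tri x y z; lra.
by rewrite /= (proj2 (d_eq0 x x) erefl).
Qed.

Lemma metric_separating_nbhs (G : topologicalType) (d : G -> G -> Real) x :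
  is_metric d -> metric_compatible d ->
  exists B : nat -> set G, (forall m, nbhs x (B m)) /\ forall y, (forall m, B m y) -> y = x.
Proof.
move=> d_metric d_compat; have [d_ge0 d_eq0 _ _] := d_metric.
exists (fun m => [set y | d x y < 2 ^- m]); split => [m | y B_y].
  exact: metric_ball_nbhs (expN2_gt0 m).
suff /d_eq0 -> : d x y = 0 by [].
apply/eqP; rewrite eq_le d_ge0 andbT leNgt; apply/negP => /expN2_lt[m].
by have := B_y m; rewrite /=; lra.
Qed.

Theorem proposition2p12 (G : topologicalType) (mul : G -> G -> G) (inv : G -> G) (e : G) :
  is_topological_group mul inv e ->
  polish_space G ->
  locally_strongly_bounded mul e ->
  forall A : set G, coarsely_bounded mul A -> strongly_bounded mul A.
Proof.
move=> G_top [_ [d0 [d0_metric d0_compat _]]] [U [U_open U_e U_sb]] A A_cb d d_metric d_inv.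
have [M U_le] := U_sb d d_metric d_inv.
have M_ge0 : 0 <= M.
  by case: d_metric => d_ge0 _ _ _; apply: le_trans (d_ge0 e e) (U_le e e U_e U_e).
have [B [B_e B_sep]] := metric_separating_nbhs e d0_metric d0_compat.
have U_nbhs : nbhs e U by apply: open_nbhs_nbhs.
have [rho [rho_metric rho_inv rho_cont d_le]] := exists_continuous_metric_dominating G_top B_e B_sep
  U_nbhs d_metric d_inv M_ge0 (fun g => U_le e g U_e).
have [Mr rho_le] := A_cb rho rho_metric rho_inv rho_cont.
exists ((4 * M + 1) * Mr + M) => x y Ax Ay.
by apply: le_trans (d_le x y) _; rewrite lerD2r ler_wpM2l ?rho_le //; lra.
Qed.
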